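(* Let $K$ be a field, $Q$ a type $A$ quiver of arbitrary orientation, $\mathbf{d}$ a dimension vector for $Q$, and let $\tilde Q$, $\tilde{\mathbf{d}}$, $G^*$, $U$ and $\pi\colon U\to\mathrm{rep}_Q(\mathbf{d})$ be as described below. Then $\pi$ induces a bijection between the $\mathbf{GL}(\tilde{\mathbf{d}})$-orbits in $U$ and the $\mathbf{GL}(\mathbf{d})$-orbits in $\mathrm{rep}_Q(\mathbf{d})$ (namely $\mathcal{O}\mapsto \pi^{-1}(\mathcal{O})$ is inverse to $\mathcal{O}'\mapsto\pi(\mathcal{O}')$), and likewise a bijection between orbit closures in $U$ and orbit closures in $\mathrm{rep}_Q(\mathbf{d})$. Moreover, for each orbit $\mathcal{O}\subseteq\mathrm{rep}_Q(\mathbf{d})$, the closure of $\pi^{-1}(\mathcal{O})$ in $U$ is isomorphic to $G^*\times\overline{\mathcal{O}}$.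
   Context: Label the vertices of $Q$ along the line as $z_0,\dots,z_n$ and the arrows as $\gamma_1,\dots,\gamma_n$, with $\gamma_i$ joining $z_{i-1}$ and $z_i$ (in either direction). $\mathrm{rep}_Q(\mathbf{d})=\prod_{a}\mathrm{Mat}_{\mathbf{d}(ha)\times\mathbf{d}(ta)}(K)$ with $\mathbf{GL}(\mathbf{d})=\prod_v\mathbf{GL}_{\mathbf{d}(v)}(K)$ acting by $g\cdot V=(g_{ha}V_ag_{ta}^{-1})_a$. The quiver $\tilde Q$ is obtained from $Q$ as follows: for each $i$ with $z_{i-1}\xrightarrow{\gamma_i}z_i\xrightarrow{\gamma_{i+1}}z_{i+1}$, add a new vertex $w_i$ and arrow $\delta_i$ and replace $\gamma_i$ by $\gamma_i\colon z_{i-1}\to w_i$, with $\delta_i\colon z_i\to w_i$ (a new sink); for each $i$ with $z_{i-1}\xleftarrow{\gamma_i}z_i\xleftarrow{\gamma_{i+1}}z_{i+1}$, add a new vertex $w_i$ and arrow $\delta_i$ and replace $\gamma_i$ by $\gamma_i\colon w_i\to z_{i-1}$, with $\delta_i\colon w_i\to z_i$ (a new source). All other arrows are kept; $\tilde Q$ is a bipartite type $A$ quiver. Set $\tilde{\mathbf{d}}(z_i)=\mathbf{d}(z_i)$, $\tilde{\mathbf{d}}(w_i)=\mathbf{d}(z_i)$, and $G^*=\prod_i\mathbf{GL}_{\tilde{\mathbf{d}}(w_i)}(K)$, so $\mathbf{GL}(\tilde{\mathbf{d}})=G^*\times\mathbf{GL}(\mathbf{d})$. Let $U\subseteq\mathrm{rep}_{\tilde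 Q}(\tilde{\mathbf{d}})$ be the open set of $\tilde V$ with every $V_{\delta_i}$ invertible, and define $\pi(\tilde V)=(X_{\gamma_i})_i$ where $X_{\gamma_i}=V_{\gamma_i}$ if no $w_i$ was inserted, $X_{\gamma_i}=V_{\delta_i}^{-1}V_{\gamma_i}$ in the new-sink case, and $X_{\gamma_i}=V_{\gamma_i}V_{\delta_i}^{-1}$ in the new-source case. *)

From HB Require Import structures.
From mathcomp Require Import all_boot all_order all_algebra.
Set Implicit Arguments. Unset Strict Implicit. Unset Printing Implicit Defensive.
Import GRing.Theory.
Local Open Scope ring_scope.

Definition seteq {T : Type} (A B : T -> Prop) : Prop := forall x, A x <-> B x.

Inductive polyfun (K : fieldType) (T I : Type) (coord : I -> T -> K) :
  (T -> K) -> Prop :=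
| pf_const (c : K) : polyfun coord (fun _ => c)
| pf_coord (i : I) : polyfun coord (coord i)
| pf_add f g : polyfun coord f -> polyfun coord g -> polyfun coord (fun x => f x + g x)
| pf_mul f g : polyfun coord f -> polyfun coord g -> polyfun coord (fun x => f x * g x).

Definition zclosure (K : fieldType) (T I : Type) (coord : I -> T -> K)
  (S : T -> Prop) : T -> Prop :=
  fun x => forall f, polyfun coord f -> (forall y, S y -> f y = 0) -> f x = 0.

Definition regular_on (K : fieldType) (T1 I1 T2 I2 : Type)
  (c1 : I1 -> T1 -> K) (c2 : I2 -> T2 -> K) (A : T1 -> Prop) (f : T1 -> T2) :=
  forall x, A x -> forall i : I2, exists p q : T1 -> K,
    [/\ polyfun c1 p, polyfun c1 q, q x != 0 &
        forall y, A y -> q y != 0 -> c2 i (f y) * q y = p y].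

Definition var_iso (K : fieldType) (T1 I1 T2 I2 : Type)
  (c1 : I1 -> T1 -> K) (c2 : I2 -> T2 -> K) (A : T1 -> Prop) (B : T2 -> Prop) :=
  exists (f : T1 -> T2) (g : T2 -> T1),
    [/\ (forall x, A x -> B (f x)), (forall y, B y -> A (g y)),
        (forall x, A x -> g (f x) = x), (forall y, B y -> f (g y) = y) &
        (regular_on c1 c2 A f /\ regular_on c2 c1 B g)].

(* Type A quiver Q: vertices z_0..z_n ('I_n.+1), arrows gamma_1..gamma_n *)
(* (0-based index j : 'I_n for gamma_(j+1)), joining lv j = z_j and     *)
(* rv j = z_(j+1).  o j = true  means gamma_(j+1) : z_j -> z_(j+1),     *)
(*                   o j = false means gamma_(j+1) : z_(j+1) -> z_j.    *)

Definition lv {n} (j : 'I_n) : 'I_n.+1 := widen_ord (leqnSn n) j.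
Definition rv {n} (j : 'I_n) : 'I_n.+1 := lift ord0 j.
Definition hdA {n} (o : 'I_n -> bool) (j : 'I_n) : 'I_n.+1 :=
  if o j then rv j else lv j.
Definition tlA {n} (o : 'I_n -> bool) (j : 'I_n) : 'I_n.+1 :=
  if o j then lv j else rv j.

Definition repA (K : fieldType) {n} (o : 'I_n -> bool) (d : 'I_n.+1 -> nat) :=
  forall j : 'I_n, 'M[K]_(d (hdA o j), d (tlA o j)).

Definition glA (K : fieldType) {n} (d : 'I_n.+1 -> nat) :=
  forall v : 'I_n.+1, 'M[K]_(d v).
Definition isGL {K : fieldType} {n} {d : 'I_n.+1 -> nat} (g : glA K d) :=
  forall v, g v \in unitmx.

Definition actA {K : fieldType} {n} {o : 'I_n -> bool} {d : 'I_n.+1 -> nat}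
  (g : glA K d) (V : repA K o d) : repA K o d :=
  fun j => g (hdA o j) *m V j *m invmx (g (tlA o j)).

Definition orbitA {K : fieldType} {n} {o : 'I_n -> bool} {d : 'I_n.+1 -> nat}
  (V : repA K o d) : repA K o d -> Prop :=
  fun W => exists g : glA K d, isGL g /\ W = actA g V.

Definition idxA {n} (o : 'I_n -> bool) (d : 'I_n.+1 -> nat) :=
  {j : 'I_n & ('I_(d (hdA o j)) * 'I_(d (tlA o j)))%type}.
Definition coordA {K : fieldType} {n} {o : 'I_n -> bool} {d : 'I_n.+1 -> nat}
  (x : idxA o d) (V : repA K o d) : K :=
  V (tag x) (tagged x).1 (tagged x).2.

(* The quiver Q~.  A vertex w_(j+1) is inserted for arrow gamma_(j+1)  *)
(* iff gamma_(j+2) exists and has the same orientation as gamma_(j+1)  *)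
(* (new sink if o j = true, new source if o j = false).                *)

Definition modified {n} (o : 'I_n -> bool) (j : 'I_n) : bool :=
  [exists k : 'I_n, (val k == j.+1) && (o k == o j)].

(* d~(w_(j+1)) = d(z_(j+1)) when w_(j+1) exists; we use size 0 (a trivial
   one-point matrix space) for indices j where no w is inserted, so that
   (forall j, 'M_(dw j)) is exactly prod_{w inserted} Mat_{d~(w)}.        *)
Definition dw {n} (o : 'I_n -> bool) (d : 'I_n.+1 -> nat) (j : 'I_n) : nat :=
  if modified o j then d (rv j) else 0%N.

Definition wmats (K : fieldType) {n} (o : 'I_n -> bool) (d : 'I_n.+1 -> nat) :=
  forall j : 'I_n, 'M[K]_(dw o d j).

(* rep_Q~(d~): the matrices of the arrows gamma_j of Q~ (whose sizes
   d~(h gamma) x d~(t gamma) coincide with those in Q) and of the new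
   arrows delta_j (square of size d(z_j)). *)
Definition repT (K : fieldType) {n} (o : 'I_n -> bool) (d : 'I_n.+1 -> nat) :=
  (repA K o d * wmats K o d)%type.

(* GL(d~) = GL(d) x G^*,  with G^* = prod_{w} GL_{d~(w)} *)
Definition glT (K : fieldType) {n} (o : 'I_n -> bool) (d : 'I_n.+1 -> nat) :=
  (glA K d * wmats K o d)%type.
Definition isGstar {K : fieldType} {n} {o : 'I_n -> bool} {d : 'I_n.+1 -> nat}
  (h : wmats K o d) := forall j, h j \in unitmx.
Definition isGLT {K : fieldType} {n} {o : 'I_n -> bool} {d : 'I_n.+1 -> nat}
  (gh : glT K o d) := isGL gh.1 /\ isGstar gh.2.

Definition actG {K : fieldType} {n} {o : 'I_n -> bool} {d : 'I_n.+1 -> nat}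
  (g : glA K d) (j : 'I_n) :
  'M[K]_(dw o d j) -> 'M[K]_(d (hdA o j), d (tlA o j)) ->
  'M[K]_(d (hdA o j), d (tlA o j)) :=
  match modified o j as m return
    'M[K]_(if m then d (rv j) else 0%N) -> 'M[K]_(d (hdA o j), d (tlA o j)) ->
    'M[K]_(d (hdA o j), d (tlA o j)) with
  | true => fun h V =>
     (match o j as b return
        'M[K]_(d (if b then rv j else lv j), d (if b then lv j else rv j)) ->
        'M[K]_(d (if b then rv j else lv j), d (if b then lv j else rv j)) with
      | true => fun V => h *m V *m invmx (g (lv j))   (* z_j -> w *)
      | false => fun V => g (lv j) *m V *m invmx h    (* w -> z_j *)
      end) V
  | false => fun _ V => g (hdA o j) *m V *m invmx (g (tlA o j))
  end.

Arguments actG {K n o d} g j _ _.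

Definition actD {K : fieldType} {n} {o : 'I_n -> bool} {d : 'I_n.+1 -> nat}
  (g : glA K d) (j : 'I_n) : 'M[K]_(dw o d j) -> 'M[K]_(dw o d j) -> 'M[K]_(dw o d j) :=
  match modified o j as m return
    'M[K]_(if m then d (rv j) else 0%N) -> 'M[K]_(if m then d (rv j) else 0%N) ->
    'M[K]_(if m then d (rv j) else 0%N) with
  | true => fun h D =>
      if o j then h *m D *m invmx (g (rv j))        (* delta : z_(j+1) -> w *)
      else g (rv j) *m D *m invmx h                 (* delta : w -> z_(j+1) *)
  | false => fun _ D => D
  end.

Arguments actD {K n o d} g j _ _.

Definition actT {K : fieldType} {n} {o : 'I_n -> bool} {d : 'I_n.+1 -> nat}
  (gh : glT K o d) (Vt : repT K o d) : repT K o d :=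
  (fun j => actG gh.1 j (gh.2 j) (Vt.1 j), fun j => actD gh.1 j (gh.2 j) (Vt.2 j)).

Definition orbitT {K : fieldType} {n} {o : 'I_n -> bool} {d : 'I_n.+1 -> nat}
  (Vt : repT K o d) : repT K o d -> Prop :=
  fun Wt => exists gh : glT K o d, isGLT gh /\ Wt = actT gh Vt.

Definition inU {K : fieldType} {n} {o : 'I_n -> bool} {d : 'I_n.+1 -> nat}
  (Vt : repT K o d) : Prop := forall j, Vt.2 j \in unitmx.

Definition piA {K : fieldType} {n} {o : 'I_n -> bool} {d : 'I_n.+1 -> nat}
  (j : 'I_n) : 'M[K]_(dw o d j) -> 'M[K]_(d (hdA o j), d (tlA o j)) ->
  'M[K]_(d (hdA o j), d (tlA o j)) :=
  match modified o j as m return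
    'M[K]_(if m then d (rv j) else 0%N) -> 'M[K]_(d (hdA o j), d (tlA o j)) ->
    'M[K]_(d (hdA o j), d (tlA o j)) with
  | true => fun D V =>
     (match o j as b return
        'M[K]_(d (if b then rv j else lv j), d (if b then lv j else rv j)) ->
        'M[K]_(d (if b then rv j else lv j), d (if b then lv j else rv j)) with
      | true => fun V => invmx D *m V      (* new sink:   V_delta^-1 V_gamma *)
      | false => fun V => V *m invmx D     (* new source: V_gamma V_delta^-1 *)
      end) V
  | false => fun _ V => V
  end.

Arguments piA {K n o d} j _ _.

Definition piT {K : fieldType} {n} {o : 'I_n -> bool} {d : 'I_n.+1 -> nat}
  (Vt : repT K o d) : repA K o d := fun j => piA j (Vt.2 j) (Vt.1 j).

Definition idxW {n} (o : 'I_n -> bool) (d : 'I_n.+1 -> nat) :=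
  {j : 'I_n & ('I_(dw o d j) * 'I_(dw o d j))%type}.
Definition coordW {K : fieldType} {n} {o : 'I_n -> bool} {d : 'I_n.+1 -> nat}
  (x : idxW o d) (D : wmats K o d) : K :=
  D (tag x) (tagged x).1 (tagged x).2.
Definition coordT {K : fieldType} {n} {o : 'I_n -> bool} {d : 'I_n.+1 -> nat}
  (x : idxA o d + idxW o d) (Vt : repT K o d) : K :=
  match x with inl a => coordA a Vt.1 | inr b => coordW b Vt.2 end.
Definition coordP {K : fieldType} {n} {o : 'I_n -> bool} {d : 'I_n.+1 -> nat}
  (x : idxW o d + idxA o d) (p : (wmats K o d * repA K o d)%type) : K :=
  match x with inl b => coordW b p.1 | inr a => coordA a p.2 end.

Definition preU {K : fieldType} {n} {o : 'I_n -> bool} {d : 'I_n.+1 -> nat}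
  (S : repA K o d -> Prop) : repT K o d -> Prop := fun Vt => inU Vt /\ S (piT Vt).
Definition imgpi {K : fieldType} {n} {o : 'I_n -> bool} {d : 'I_n.+1 -> nat}
  (S : repT K o d -> Prop) : repA K o d -> Prop :=
  fun X => exists Vt, S Vt /\ piT Vt = X.
Definition clA {K : fieldType} {n} {o : 'I_n -> bool} {d : 'I_n.+1 -> nat}
  (S : repA K o d -> Prop) : repA K o d -> Prop := zclosure coordA S.
(* closure in U (subspace topology) *)
Definition clU {K : fieldType} {n} {o : 'I_n -> bool} {d : 'I_n.+1 -> nat}
  (S : repT K o d -> Prop) : repT K o d -> Prop :=
  fun Vt => inU Vt /\ zclosure coordT S Vt.
Definition GstarX {K : fieldType} {n} {o : 'I_n -> bool} {d : 'I_n.+1 -> nat}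
  (C : repA K o d -> Prop) : (wmats K o d * repA K o d)%type -> Prop :=
  fun p => isGstar p.1 /\ C p.2.

(* Sending Vt to (V_delta, pi Vt) identifies U with G^* x rep_Q(d); the inverse
   multiplies each X_gamma back by its V_delta.  In this chart GL(d) acts on the
   rep_Q(d) factor as usual and, over a fixed orbit of GL(d), the G^* factor
   moves V_delta freely and transitively, so GL(d~)-orbits in U are exactly the
   pi-preimages of GL(d)-orbits.  For closures, a polynomial f on rep_Q(d)
   pulls back to f(pi Vt) * det(V_delta)^N, a polynomial on rep_Q~(d~), and
   det(V_delta) does not vanish on U; conversely a polynomial on rep_Q~(d~)
   composed with the inverse chart at fixed V_delta is a polynomial on
   rep_Q(d).  Hence the closure of pi^-1(S) in U is pi^-1 of the closure of S. *)

From HB Require Import structures.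
From mathcomp Require Import all_boot all_order all_algebra all_fingroup.
From mathcomp Require Import ring.
From Stdlib Require Import FunctionalExtensionality.
Set Implicit Arguments. Unset Strict Implicit. Unset Printing Implicit Defensive.
Import GRing.Theory.
Local Open Scope ring_scope.

Lemma seteq_sym T (A B : T -> Prop) : seteq A B -> seteq B A.
Proof. by move=> AB x; split => /AB. Qed.

Lemma seteq_trans T (A B C : T -> Prop) : seteq A B -> seteq B C -> seteq A C.
Proof. by move=> AB BC x; split => [/AB/BC|/BC/AB]. Qed.

Lemma var_iso_eq_dom (K : fieldType) (T1 I1 T2 I2 : Type)
    (c1 : I1 -> T1 -> K) (c2 : I2 -> T2 -> K) (A A' : T1 -> Prop) (B : T2 -> Prop) :
  seteq A A' -> var_iso c1 c2 A B -> var_iso c1 c2 A' B.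
Proof.
move=> AA' [f [g [fAB gBA gfA fgB [rf rg]]]]; exists f, g; split.
- by move=> x /AA' /fAB.
- by move=> y /gBA /AA'.
- by move=> x /AA' /gfA.
- exact: fgB.
split=> // x /AA' Ax i; have [p [q [Pp Pq qx fpq]]] := rf x Ax i.
by exists p, q; split=> // y /AA'; apply: fpq.
Qed.

Section PolynomialFunctions.
Variables (K : fieldType) (T I : Type) (c : I -> T -> K).

Lemma polyfun_ext f g : polyfun c f -> f =1 g -> polyfun c g.
Proof. by move=> Pf /functional_extensionality <-. Qed.

Lemma polyfun_sum (J : Type) (r : seq J) (P : pred J) (F : J -> T -> K) :
  (forall i, polyfun c (F i)) -> polyfun c (fun x => \sum_(i <- r | P i) F i x).
Proof.
move=> PF; elim: r => [|i r IH].
  by apply: (polyfun_ext (pf_const c 0)) => x; rewrite big_nil.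
case Pi: (P i).
  by apply: (polyfun_ext (pf_add (PF i) IH)) => x; rewrite big_cons Pi.
by apply: (polyfun_ext IH) => x; rewrite big_cons Pi.
Qed.

Lemma polyfun_prod (J : Type) (r : seq J) (P : pred J) (F : J -> T -> K) :
  (forall i, polyfun c (F i)) -> polyfun c (fun x => \prod_(i <- r | P i) F i x).
Proof.
move=> PF; elim: r => [|i r IH].
  by apply: (polyfun_ext (pf_const c 1)) => x; rewrite big_nil.
case Pi: (P i).
  by apply: (polyfun_ext (pf_mul (PF i) IH)) => x; rewrite big_cons Pi.
by apply: (polyfun_ext IH) => x; rewrite big_cons Pi.
Qed.

Lemma polyfun_exp f N : polyfun c f -> polyfun c (fun x => f x ^+ N).
Proof.
move=> Pf; elim: N => [|N IH].
  by apply: (polyfun_ext (pf_const c 1)) => x; rewrite expr0.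
by apply: (polyfun_ext (pf_mul Pf IH)) => x; rewrite exprS.
Qed.

Definition polymx p q (M : T -> 'M[K]_(p, q)) :=
  forall a b, polyfun c (fun x => M x a b).

Lemma polymx_const p q (A : 'M[K]_(p, q)) : polymx (fun _ => A).
Proof. by move=> a b; apply: pf_const. Qed.

Lemma polymx_mul p q r (A : T -> 'M[K]_(p, q)) (B : T -> 'M[K]_(q, r)) :
  polymx A -> polymx B -> polymx (fun x => A x *m B x).
Proof.
move=> PA PB a b; apply: (polyfun_ext (polyfun_sum (index_enum _) xpredT
   (F := fun k x => A x a k * B x k b) _)) => [k|x]; first exact: pf_mul.
by rewrite mxE.
Qed.

Lemma polyfun_det p (A : T -> 'M[K]_p) : polymx A -> polyfun c (fun x => \det (A x)).
Proof.
move=> PA; apply: (polyfun_ext (polyfun_sum (index_enum _) xpredT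
   (F := fun s x => (-1) ^+ (s : 'S_p) * \prod_i A x i (s i)) _)) => [s|x //].
by apply: pf_mul; [exact: pf_const | apply: polyfun_prod => i; apply: PA].
Qed.

Lemma polymx_adj p (A : T -> 'M[K]_p) : polymx A -> polymx (fun x => \adj (A x)).
Proof.
move=> PA a b.
have Pminor : polymx (fun x => row' b (col' a (A x))).
  by move=> i k; apply: (polyfun_ext (PA _ _)) => x; rewrite !mxE.
apply: (polyfun_ext (pf_mul (pf_const c ((-1) ^+ (b + a))) (polyfun_det Pminor))).
by move=> x; rewrite mxE.
Qed.

End PolynomialFunctions.

Lemma invmxM (K : fieldType) p (A B : 'M[K]_p) : A \in unitmx -> B \in unitmx ->
  invmx (A *m B) = invmx B *m invmx A.
Proof.
move=> uA uB; have uAB : A *m B \in unitmx by rewrite unitmx_mul uA.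
apply: (can_inj (mulKmx uAB)).
by rewrite mulmxV // mulmxA -(mulmxA A) mulmxV // mulmx1 mulmxV.
Qed.

Definition unpiA {K : fieldType} {n} {o : 'I_n -> bool} {d : 'I_n.+1 -> nat}
  (j : 'I_n) : 'M[K]_(dw o d j) -> 'M[K]_(d (hdA o j), d (tlA o j)) ->
  'M[K]_(d (hdA o j), d (tlA o j)) :=
  match modified o j as m return
    'M[K]_(if m then d (rv j) else 0%N) -> 'M[K]_(d (hdA o j), d (tlA o j)) ->
    'M[K]_(d (hdA o j), d (tlA o j)) with
  | true => fun D V =>
     (match o j as b return
        'M[K]_(d (if b then rv j else lv j), d (if b then lv j else rv j)) ->
        'M[K]_(d (if b then rv j else lv j), d (if b then lv j else rv j)) with
      | true => fun V => D *m V
      | false => fun V => V *m D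
      end) V
  | false => fun _ V => V
  end.
Arguments unpiA {K n o d} j _ _.

Section Arrow.
Variables (K : fieldType) (n : nat) (o : 'I_n -> bool) (d : 'I_n.+1 -> nat).
Variable j : 'I_n.

Lemma piA_unpiA (D : 'M[K]_(dw o d j)) X : D \in unitmx -> piA j D (unpiA j D X) = X.
Proof.
move: D X; rewrite /dw /piA /unpiA /hdA /tlA; case: (modified o j) => D X uD //.
by move: X; case: (o j) => X; [rewrite mulKmx | rewrite mulmxK].
Qed.

Lemma unpiA_piA (D : 'M[K]_(dw o d j)) X : D \in unitmx -> unpiA j D (piA j D X) = X.
Proof.
move: D X; rewrite /dw /piA /unpiA /hdA /tlA; case: (modified o j) => D X uD //.
by move: X; case: (o j) => X; [rewrite mulKVmx | rewrite mulmxKV].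
Qed.

Lemma actD_unit (g : glA K d) (h D : 'M[K]_(dw o d j)) :
  isGL g -> h \in unitmx -> D \in unitmx -> actD g j h D \in unitmx.
Proof.
move: h D; rewrite /dw /actD; case: (modified o j) => h D uG uh uD //.
by case: (o j); rewrite !unitmx_mul ?unitmx_inv ?uh ?uD ?uG.
Qed.

Lemma piA_act (g : glA K d) (h D : 'M[K]_(dw o d j)) V :
  isGL g -> h \in unitmx -> D \in unitmx ->
  piA j (actD g j h D) (actG g j h V) =
  g (hdA o j) *m piA j D V *m invmx (g (tlA o j)).
Proof.
move: h D V; rewrite /dw /actD /actG /piA /hdA /tlA.
case: (modified o j) => h D V uG uh uD //.
by move: V; case: (o j) => V;
  rewrite !invmxM ?invmxK ?unitmx_mul ?unitmx_inv ?uh ?uD ?uG // !mulmxA mulmxKV.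

Qed.

Lemma piA_fiber_transitive (g : glA K d) (D1 D2 : 'M[K]_(dw o d j)) V1 V2 :
  isGL g -> D1 \in unitmx -> D2 \in unitmx ->
  piA j D2 V2 = g (hdA o j) *m piA j D1 V1 *m invmx (g (tlA o j)) ->
  exists h, h \in unitmx /\ actD g j h D1 = D2 /\ actG g j h V1 = V2.
Proof.
move: D1 D2 V1 V2; rewrite /dw /actD /actG /piA /hdA /tlA.
case: (modified o j) => D1 D2 V1 V2 uG u1 u2; last first.
  by move=> ->; exists D1; rewrite {2}(flatmx0 D1) (flatmx0 D2).
move: V1 V2; case: (o j) => V1 V2 E.
  exists (D2 *m g (rv j) *m invmx D1).
  split; first by rewrite !unitmx_mul unitmx_inv u1 u2 uG.
  split; first by rewrite mulmxKV // mulmxK.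
  by rewrite -[RHS](mulKVmx u2) E !mulmxA.
exists (invmx D2 *m g (rv j) *m D1).
split; first by rewrite !unitmx_mul unitmx_inv u1 u2 uG.
rewrite !invmxM ?invmxK ?unitmx_mul ?unitmx_inv ?u1 ?u2 ?uG //.
split; first by rewrite !mulmxA (mulmxK u1) mulmxV // mul1mx.
by rewrite -[RHS](mulmxKV u2) E !mulmxA.
Qed.

Section Polynomiality.
Variables (T I : Type) (c : I -> T -> K).

(* Cramer's rule clears the denominator of [piA]. *)
Lemma polymx_det_piA (DD : T -> 'M[K]_(dw o d j)) VV :
  polymx c DD -> polymx c VV -> exists M, polymx c M /\
  forall x, DD x \in unitmx -> \det (DD x) *: piA j (DD x) (VV x) = M x.
Proof.
move: DD VV; rewrite /dw /piA /hdA /tlA.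
case: (modified o j) => DD VV PD PV; last first.
  by exists VV; split => // x _; rewrite det_mx00 scale1r.
move: VV PV; case: (o j) => VV PV.
  exists (fun x => \adj (DD x) *m VV x).
  split=> [|x uD]; first by apply: polymx_mul => //; exact: polymx_adj.
  by rewrite /invmx uD -scalemxAl scalerA mulrV ?scale1r.
exists (fun x => VV x *m \adj (DD x)).
split=> [|x uD]; first by apply: polymx_mul => //; exact: polymx_adj.
by rewrite /invmx uD -scalemxAr scalerA mulrV ?scale1r.
Qed.

Lemma polymx_unpiA (DD : T -> 'M[K]_(dw o d j)) VV :
  polymx c DD -> polymx c VV -> polymx c (fun x => unpiA j (DD x) (VV x)).
Proof.
move: DD VV; rewrite /dw /unpiA /hdA /tlA.
case: (modified o j) => DD VV PD PV //.
by move: VV PV; case: (o j) => VV PV; apply: polymx_mul.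
Qed.

End Polynomiality.
End Arrow.

Section Chart.
Variables (K : fieldType) (n : nat) (o : 'I_n -> bool) (d : 'I_n.+1 -> nat).
Local Notation repT := (repT K o d).
Local Notation repA := (repA K o d).
Local Notation prodGR := (wmats K o d * repA)%type.

Definition unpiT (p : prodGR) : repT := (fun j => unpiA j (p.1 j) (p.2 j), p.1).

Definition detW (Vt : repT) : K := \prod_(k : 'I_n) \det (Vt.2 k).

Definition Gstar1 : wmats K o d := fun j => 1%:M.

Lemma isGstar1 : isGstar Gstar1.
Proof. by move=> j; apply: unitmx1. Qed.

Lemma piT_unpiT (D : wmats K o d) X : isGstar D -> piT (unpiT (D, X)) = X.
Proof. by move=> uD; apply: functional_extensionality_dep => j; apply: piA_unpiA. Qed.

Lemma unpiT_piT (Vt : repT) : inU Vt -> unpiT (Vt.2, piT Vt) = Vt.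
Proof.
case: Vt => V D uD; rewrite /unpiT /=; congr pair.
by apply: functional_extensionality_dep => j; apply: unpiA_piA; apply: uD.
Qed.

Lemma inU_unpiT (D : wmats K o d) X : isGstar D -> inU (unpiT (D, X)).
Proof. by []. Qed.

Lemma inU_actT (gh : glT K o d) Vt : isGLT gh -> inU Vt -> inU (actT gh Vt).
Proof. by case=> uG uH uV j; apply: actD_unit. Qed.

Lemma piT_actT (gh : glT K o d) Vt : isGLT gh -> inU Vt ->
  piT (actT gh Vt) = actA gh.1 (piT Vt).
Proof.
by case=> uG uH uV; apply: functional_extensionality_dep => j; exact: piA_act.
Qed.

Lemma orbitT_preU (Vt : repT) : inU Vt -> seteq (orbitT Vt) (preU (orbitA (piT Vt))).
Proof.
move=> uV W; split.
  case=> gh [gG ->]; split; first exact: inU_actT.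
  by exists gh.1; split; [case: gG | rewrite piT_actT].
case=> uW [g [uG E]].
have fiber j : exists h : 'M[K]_(dw o d j), [&& h \in unitmx,
    actD g j h (Vt.2 j) == W.2 j & actG g j h (Vt.1 j) == W.1 j].
  have piW : piA j (W.2 j) (W.1 j) =
      g (hdA o j) *m piA j (Vt.2 j) (Vt.1 j) *m invmx (g (tlA o j)).
    exact: (congr1 (fun f => f j) E).
  have [h [uh [hD hV]]] := piA_fiber_transitive uG (uV j) (uW j) piW.
  by exists h; rewrite uh hD hV !eqxx.
exists (g, fun j => xchoose (fiber j)); split.
  by split=> // j; case/and3P: (xchooseP (fiber j)).
case: W {E uW} fiber => V D fiber; congr pair; apply: functional_extensionality_dep => j;
  by case/and3P: (xchooseP (fiber j)) => _ /eqP hD /eqP hV.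
Qed.

Lemma polymx_deltaT j : polymx (@coordT K n o d) (fun W : repT => W.2 j).
Proof. by move=> a b; apply: (polyfun_ext (pf_coord _ (inr (existT _ j (a, b))))). Qed.

Lemma polymx_gammaT j : polymx (@coordT K n o d) (fun W : repT => W.1 j).
Proof. by move=> a b; apply: (polyfun_ext (pf_coord _ (inl (existT _ j (a, b))))). Qed.

Lemma polyfun_detW : polyfun (@coordT K n o d) detW.
Proof.
apply: (polyfun_ext (polyfun_prod (index_enum _) xpredT
  (F := fun k W => \det (W.2 k)) _)) => // k.
exact/polyfun_det/polymx_deltaT.
Qed.

Lemma detW_neq0 W : inU W -> detW W != 0.
Proof. by move=> uW; apply/prodf_neq0 => k _; rewrite -unitfE; apply: uW. Qed.

Lemma coordA_piT_detW (a : idxA o d) : exists F, polyfun (@coordT K n o d) F /\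
  forall W, inU W -> coordA a (piT W) * detW W = F W.
Proof.
case: a => j [r s].
have [M [PM HM]] := polymx_det_piA (polymx_deltaT (j:=j)) (polymx_gammaT (j:=j)).
exists (fun W => M W r s * \prod_(k | k != j) \det (W.2 k)); split.
  apply: pf_mul; first exact: PM.
  by apply: polyfun_prod => k; exact/polyfun_det/polymx_deltaT.
move=> W uW; rewrite /detW (bigD1 j) //= mulrA -HM ?mxE; last exact: uW.
by rewrite /coordA /= [_ * \det _]mulrC.
Qed.

Lemma polyfun_piT_detW f : polyfun (@coordA K n o d) f ->
  exists F N, polyfun (@coordT K n o d) F /\
  forall W, inU W -> F W = f (piT W) * detW W ^+ N.
Proof.
elim=> [k|a|f1 f2 _ [F1 [N1 [P1 H1]]] _ [F2 [N2 [P2 H2]]]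
          |f1 f2 _ [F1 [N1 [P1 H1]]] _ [F2 [N2 [P2 H2]]]].
- by exists (fun _ => k), 0%N; split; [exact: pf_const | move=> W _; rewrite mulr1].
- have [F [PF HF]] := coordA_piT_detW a.
  by exists F, 1%N; split => // W uW; rewrite expr1 HF.
- exists (fun W => F1 W * detW W ^+ N2 + F2 W * detW W ^+ N1), (N1 + N2)%N; split.
    by apply: pf_add; apply: pf_mul => //; apply: polyfun_exp; apply: polyfun_detW.
  by move=> W uW; rewrite H1 // H2 // exprD; ring.
- exists (fun W => F1 W * F2 W), (N1 + N2)%N; split; first exact: pf_mul.
  by move=> W uW; rewrite H1 // H2 // exprD; ring.
Qed.

Lemma polyfun_unpiT (D : wmats K o d) F : polyfun (@coordT K n o d) F ->
  polyfun (@coordA K n o d) (fun X => F (unpiT (D, X))).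
Proof.
elim=> [k|[[j [r s]]|b]|f1 f2 _ P1 _ P2|f1 f2 _ P1 _ P2].
- exact: pf_const.
- have PX : polymx (@coordA K n o d) (fun X : repA => X j).
    by move=> a b; apply: (polyfun_ext (pf_coord _ (existT _ j (a, b)))).
  exact: (polymx_unpiA (polymx_const _ (D j)) PX).
- exact: pf_const.
- exact: pf_add.
- exact: pf_mul.
Qed.

Lemma clU_preU (S : repA -> Prop) : seteq (clU (preU S)) (preU (clA S)).
Proof.
move=> Vt; split.
  case=> uV clV; split => // f Pf Sf.
  have [F [N [PF HF]]] := polyfun_piT_detW Pf.
  have : F Vt = 0 by apply: clV => // W [uW SW]; rewrite HF // Sf // mul0r.
  rewrite HF // => /eqP; rewrite mulf_eq0 expf_eq0 (negbTE (detW_neq0 uV)) andbF orbF.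
  by move/eqP.
case=> uV clV; split => // F PF SF; rewrite -(unpiT_piT uV).
apply: (clV _ (polyfun_unpiT Vt.2 PF)) => Y SY; apply: SF; split => //.
by rewrite piT_unpiT.
Qed.

Lemma regular_on_piT (A : repT -> Prop) : (forall W, A W -> inU W) ->
  regular_on coordT coordP A (fun W : repT => (W.2, piT W)).
Proof.
move=> AU W AW [b|a].
  exists (coordT (inr b)), (fun _ => 1); split => //.
  - exact: pf_coord.
  - exact: pf_const.
  - exact: oner_neq0.
  - by move=> y _ _; rewrite mulr1.
have [F [PF HF]] := coordA_piT_detW a.
exists F, detW; split => //; first exact: polyfun_detW.
  exact: detW_neq0 (AU _ AW).
by move=> y /AU uy _; apply: HF.
Qed.

Lemma regular_on_unpiT (B : prodGR -> Prop) : regular_on coordP coordT B unpiT.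
Proof.
move=> p _ x; exists (fun q => coordT x (unpiT q)), (fun _ => 1); split => //.
- case: x => [[j [r s]]|b].
    have PD : polymx (@coordP K n o d) (fun q : prodGR => q.1 j).
      by move=> a b; apply: (polyfun_ext (pf_coord _ (inl (existT _ j (a, b))))).
    have PV : polymx (@coordP K n o d) (fun q : prodGR => q.2 j).
      by move=> a b; apply: (polyfun_ext (pf_coord _ (inr (existT _ j (a, b))))).
    exact: (polymx_unpiA PD PV).
  exact: (pf_coord _ (inl b)).
- exact: pf_const.
- exact: oner_neq0.
- by move=> y _ _; rewrite mulr1.
Qed.

Lemma var_iso_preU (C : repA -> Prop) : var_iso coordT coordP (preU C) (GstarX C).
Proof.
exists (fun W : repT => (W.2, piT W)), unpiT; split.
- by move=> W [uW CW].
- by case=> D X [uD CX]; split; rewrite ?piT_unpiT.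
- by move=> W [uW _]; apply: unpiT_piT.
- by case=> D X [uD _]; rewrite /= piT_unpiT.
- by split; [apply: regular_on_piT => W [] | apply: regular_on_unpiT].
Qed.

End Chart.

Section OrbitCorrespondence.
Variables (K : fieldType) (n : nat) (o : 'I_n -> bool) (d : 'I_n.+1 -> nat).
Local Notation repT := (repT K o d).
Local Notation repA := (repA K o d).

Lemma preU_ext (S1 S2 : repA -> Prop) : seteq S1 S2 -> seteq (preU S1) (preU S2).
Proof. by move=> S12 x; split => -[uX /S12]. Qed.

Lemma imgpi_ext (S1 S2 : repT -> Prop) : seteq S1 S2 -> seteq (imgpi S1) (imgpi S2).
Proof. by move=> S12 X; split => -[W [/S12 SW <-]]; exists W. Qed.

Lemma clU_ext (S1 S2 : repT -> Prop) : seteq S1 S2 -> seteq (clU S1) (clU S2).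
Proof.
move=> S12 W; split=> -[uW clW]; split=> // f Pf Sf;
  by apply: clW Pf _ => y /S12; apply: Sf.
Qed.

Lemma imgpi_preU (S : repA -> Prop) : seteq (imgpi (preU S)) S.
Proof.
move=> X; split=> [[W [[_ SW] <-]] //|SX].
have piX := piT_unpiT X (@isGstar1 K n o d).
exists (unpiT (Gstar1 K o d, X)); do 2?split; rewrite ?piX //.
exact/inU_unpiT/isGstar1.
Qed.

Lemma imgpi_orbitT (Vt : repT) : inU Vt ->
  seteq (imgpi (orbitT Vt)) (orbitA (piT Vt)).
Proof. by move=> uV; apply: seteq_trans (imgpi_preU _); apply/imgpi_ext/orbitT_preU. Qed.

Lemma clU_orbitT (Vt : repT) : inU Vt ->
  seteq (clU (orbitT Vt)) (preU (clA (orbitA (piT Vt)))).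
Proof. by move=> uV; apply: seteq_trans (clU_preU _); apply/clU_ext/orbitT_preU. Qed.

End OrbitCorrespondence.

Theorem theorem5p3 (K : fieldType) (n : nat) (o : 'I_n -> bool)
    (d : 'I_n.+1 -> nat) :
  (forall X : repA K o d, exists Vt : repT K o d,
      inU Vt /\ seteq (preU (orbitA X)) (orbitT Vt)) /\
  (forall Vt : repT K o d, inU Vt ->
      seteq (imgpi (orbitT Vt)) (orbitA (piT Vt))) /\
  (forall X : repA K o d, seteq (imgpi (preU (orbitA X))) (orbitA X)) /\
  (forall Vt : repT K o d, inU Vt ->
      seteq (preU (imgpi (orbitT Vt))) (orbitT Vt)) /\
  (forall X : repA K o d,
      seteq (clU (preU (orbitA X))) (preU (clA (orbitA X)))) /\
  (forall X : repA K o d,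
      seteq (imgpi (preU (clA (orbitA X)))) (clA (orbitA X))) /\
  (forall Vt : repT K o d, inU Vt ->
      seteq (imgpi (clU (orbitT Vt))) (clA (orbitA (piT Vt)))) /\
  (forall Vt : repT K o d, inU Vt ->
      seteq (preU (imgpi (clU (orbitT Vt)))) (clU (orbitT Vt))) /\
  (forall X : repA K o d,
      var_iso coordT coordP (clU (preU (orbitA X))) (GstarX (clA (orbitA X)))).
Proof.
split.
  move=> X; pose Vt := unpiT (Gstar1 K o d, X).
  have uV : inU Vt := inU_unpiT X (@isGstar1 K n o d).
  exists Vt; split=> //; apply: seteq_sym.
  by have := orbitT_preU uV; rewrite piT_unpiT //; apply: isGstar1.
split; first exact: imgpi_orbitT.
split; first by move=> X; apply: imgpi_preU.
split.
  move=> Vt uV; apply: seteq_trans (preU_ext (imgpi_orbitT uV)) _.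
  exact: seteq_sym (orbitT_preU uV).
split; first by move=> X; apply: clU_preU.
split; first by move=> X; apply: imgpi_preU.
split.
  by move=> Vt uV; apply: seteq_trans (imgpi_preU _); apply/imgpi_ext/clU_orbitT.
split.
  move=> Vt uV; apply: seteq_trans (seteq_sym (clU_orbitT uV)).
  by apply/preU_ext; apply: seteq_trans (imgpi_ext (clU_orbitT uV)) (imgpi_preU _).
by move=> X; apply: var_iso_eq_dom (seteq_sym (clU_preU _)) (var_iso_preU _).
Qed.
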